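(* Let $a,c>0$ and $z(k)=-ak^2+ik+c$ for $k\in\mathbb{R}$, and let $\sqrt{\cdot}$ denote the principal square root. Then $$\inf_{k\in\mathbb{R}}\Re\sqrt{z(k)}=\begin{cases}\sqrt{c},&4ac\le 1,\\ \frac{1}{2\sqrt a},&4ac>1,\end{cases}\qquad \sup_{k\in\mathbb{R}}\Re\sqrt{z(k)}=\begin{cases}\frac{1}{2\sqrt a},&4ac<1,\\ \sqrt{c},&4ac\ge 1.\end{cases}$$
   Context: Here $\frac{1}{2\sqrt a}=\lim_{|k|\to\infty}\Re\sqrt{z(k)}$. *)

From HB Require Import structures.
From mathcomp Require Import all_boot all_order all_algebra.
From mathcomp Require Import all_classical all_reals.
From mathcomp Require Import complex.
Set Implicit Arguments. Unset Strict Implicit. Unset Printing Implicit Defensive.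
Import Order.TTheory GRing.Theory Num.Theory.
Local Open Scope ring_scope.

Definition zfun (R : rcfType) (a c k : R) : R[i] :=
  - (a%:C)%C * (k%:C)%C ^+ 2 + 'i%C * (k%:C)%C + (c%:C)%C.

(* k |-> Re (principal sqrt (z k)); sqrtc is the principal square root
   (nonnegative real part, and nonnegative imaginary part on the negative axis) *)
Definition reSqrtZ (R : rcfType) (a c : R) : R -> R :=
  fun k => complex.Re (sqrtc (zfun a c k)).

(* Let u + i v be the principal square root of z(k), so u >= 0.  Comparing
   (u + i v)^2 with z(k) gives u^2 - v^2 = c - a k^2 and 2 u v = k, hence
     4 u^2 (u^2 - c) + k^2 (4 a u^2 - 1) = 0.
   As u > 0 (u = 0 would force k = 0), the factors u^2 - c and 4 a u^2 - 1 never have the same strict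
   sign: u always lies between sqrt c (its value at k = 0) and 1 / (2 sqrt a).
   Conversely, for u strictly between the two, solving the identity for k^2
   produces a k with Re (sqrt (z k)) = u.  So the range is an interval with
   these endpoints, and its inf and sup are their min and max. *)

From HB Require Import structures.
From mathcomp Require Import all_boot all_order all_algebra.
From mathcomp Require Import all_classical all_reals.
From mathcomp Require Import complex.
From mathcomp Require Import ring lra.
Import Order.TTheory GRing.Theory Num.Theory.
Local Open Scope ring_scope.
Local Open Scope classical_set_scope.

Section PrincipalSqrt.
Context {R : rcfType}.
Implicit Types z w : R[i].

Lemma Re_sqrtc_ge0 z : 0 <= complex.Re (sqrtc z).
Proof. by case: z => x y; rewrite /= sqrtr_ge0. Qed.

Lemma sqrtc_sqr w : 0 < complex.Re w -> sqrtc (w ^+ 2) = w.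
Proof.
move=> w_gt0; set s := sqrtc _.
have : (s - w) * (s + w) = 0 by rewrite -subr_sqr sqr_sqrtc subrr.
have Re_sw : 0 < complex.Re (s + w) by rewrite raddfD ltr_wpDl // Re_sqrtc_ge0.
have sw_neq0 : s + w != 0 by apply: contraTneq Re_sw => ->; rewrite ltxx.
by move/eqP; rewrite mulf_eq0 (negPf sw_neq0) orbF subr_eq0 => /eqP.
Qed.

Lemma Re_sqrtc_quartic z :
  4 * complex.Re (sqrtc z) ^+ 2 * (complex.Re (sqrtc z) ^+ 2 - complex.Re z)
  = complex.Im z ^+ 2.
Proof.
suff sqrE w : 4 * complex.Re w ^+ 2 * (complex.Re w ^+ 2 - complex.Re (w ^+ 2))
              = complex.Im (w ^+ 2) ^+ 2 by have := sqrE (sqrtc z); rewrite sqr_sqrtc.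
by case: w => x y; rewrite !expr2 /=; simpc; ring.
Qed.

End PrincipalSqrt.

Section BetweenMinMax.
Variable R : realDomainType.
Implicit Types l h x : R.

Lemma mulr_sub_le0_minmax l h x :
  (x - l) * (x - h) <= 0 -> Num.min l h <= x <= Num.max l h.
Proof. by case: (leP l h) => lh ?; apply/andP; split; nra. Qed.

Lemma minmax_mulr_sub_lt0 l h x :
  Num.min l h < x < Num.max l h -> (x - l) * (x - h) < 0.
Proof. by case: (leP l h) => lh /andP[? ?]; nra. Qed.

End BetweenMinMax.

Lemma inf_sup_squeeze (R : realType) (E : set R) (l h : R) : E !=set0 ->
  (forall x, E x -> l <= x <= h) -> (forall x, l < x < h -> E x) ->
  inf E = l /\ sup E = h.
Proof.
move=> E_n0 E_in E_ge; have [x0 Ex0] := E_n0.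
have /andP[lx0 x0h] := E_in x0 Ex0.
have lbE : lbound E l by move=> x /E_in /andP[].
have ubE : ubound E h by move=> x /E_in /andP[].
split; apply/eqP; rewrite eq_le.
- have inf_le : lbound E (inf E) by apply: ge_inf; exists l.
  rewrite lb_le_inf // andbT leNgt; apply/negP => lt_l_inf.
  have infx0 := inf_le x0 Ex0.
  have mid : l < (l + inf E) / 2 < h by apply/andP; split; lra.
  have := inf_le _ (E_ge _ mid); lra.
- have sup_ge : ubound E (sup E) by apply: sup_upper_bound; split; [exists x0 | exists h].
  rewrite ge_sup //= leNgt; apply/negP => lt_sup_h.
  have x0sup := sup_ge x0 Ex0.
  have mid : l < (sup E + h) / 2 < h by apply/andP; split; lra.
  have := sup_ge _ (E_ge _ mid); lra.
Qed.

Section ReSqrtZ.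
Variables (R : rcfType) (a c : R).
Hypotheses (a_gt0 : 0 < a) (c_gt0 : 0 < c).
Local Notation r := (Num.sqrt c).
Local Notation m := (1 / (2 * Num.sqrt a)).

Lemma zfunE k : zfun a c k = ((c - a * k ^+ 2) +i* k)%C.
Proof. by rewrite /zfun; simpc; congr (_ +i* _)%C; ring. Qed.

Lemma reSqrtZ_quartic k (y := reSqrtZ a c k) :
  4 * y ^+ 2 * (y ^+ 2 - c) + k ^+ 2 * (4 * a * y ^+ 2 - 1) = 0.
Proof.
have := Re_sqrtc_quartic (zfun a c k); rewrite -/(reSqrtZ a c k) -/y zfunE /=.
by move=> quartic; lra.
Qed.

Lemma reSqrtZ0 : reSqrtZ a c 0 = r.
Proof.
rewrite /reSqrtZ zfunE expr0n mulr0 subr0 sqrtc_sqrtr //.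
by rewrite lecE /= eqxx ltW.
Qed.

Lemma reSqrtZ_gt0 k : 0 < reSqrtZ a c k.
Proof.
rewrite lt0r Re_sqrtc_ge0 andbT; apply/eqP => y0.
have k0 : k = 0.
  apply/eqP; rewrite -sqrf_eq0; apply/eqP.
  by have := reSqrtZ_quartic k; rewrite /= y0; lra.
by move: y0; rewrite k0 reSqrtZ0; apply/eqP; rewrite gt_eqF // sqrtr_gt0.
Qed.

Lemma m_gt0 : 0 < m.
Proof. by rewrite divr_gt0 // mulr_gt0 // sqrtr_gt0. Qed.

Lemma four_a_m_sqr : 4 * a * m ^+ 2 = 1.
Proof.
have sqrt_a_gt0 : 0 < Num.sqrt a by rewrite sqrtr_gt0.
rewrite -{1}(sqr_sqrtr (ltW a_gt0)); field.
by rewrite gt_eqF.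
Qed.

Lemma four_a_sqr_sub1 x : 4 * a * x ^+ 2 - 1 = 4 * a * (x + m) * (x - m).
Proof. by rewrite -[X in _ - X = _]four_a_m_sqr; ring. Qed.

Lemma quartic_factor y :
  (y ^+ 2 - c) * (4 * a * y ^+ 2 - 1) = 4 * a * (y + r) * (y + m) * ((y - r) * (y - m)).
Proof.
by rewrite four_a_sqr_sub1 -[X in _ ^+ 2 - X](sqr_sqrtr (ltW c_gt0)) subr_sqr; ring.
Qed.

Lemma quartic_factor_pos y : 0 < y -> 0 < 4 * a * (y + r) * (y + m).
Proof.
move=> y_gt0; have m0 := m_gt0; have r0 : 0 <= r := sqrtr_ge0 c.
by rewrite !mulr_gt0 //; lra.
Qed.

Lemma reSqrtZ_bounds k : Num.min r m <= reSqrtZ a c k <= Num.max r m.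
Proof.
set y := reSqrtZ a c k; have y_gt0 : 0 < y := reSqrtZ_gt0 k.
apply: mulr_sub_le0_minmax; rewrite -(pmulr_rle0 _ (quartic_factor_pos _ y_gt0)).
rewrite -quartic_factor -(pmulr_rle0 _ (_ : 0 < 4 * y ^+ 2)); last first.
  by rewrite mulr_gt0 // exprn_gt0.
have /= := reSqrtZ_quartic k; rewrite -/y => quartic.
have -> : 4 * y ^+ 2 * ((y ^+ 2 - c) * (4 * a * y ^+ 2 - 1))
          = (4 * a * y ^+ 2 - 1) * (4 * y ^+ 2 * (y ^+ 2 - c) + k ^+ 2 * (4 * a * y ^+ 2 - 1))
            - (k * (4 * a * y ^+ 2 - 1)) ^+ 2 by ring.
by rewrite quartic mulr0 sub0r oppr_le0 sqr_ge0.
Qed.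

Lemma reSqrtZ_onto y : Num.min r m < y < Num.max r m -> range (reSqrtZ a c) y.
Proof.
move=> y_mid; have /andP[min_y _] := y_mid.
have y_gt0 : 0 < y.
  by apply: lt_trans min_y; rewrite lt_min m_gt0 sqrtr_gt0 c_gt0.
set d := 4 * a * y ^+ 2 - 1.
have quartic_lt0 : (y ^+ 2 - c) * d < 0.
  by rewrite quartic_factor pmulr_rlt0 ?quartic_factor_pos ?minmax_mulr_sub_lt0.
have d_neq0 : d != 0 by apply: contraTneq quartic_lt0 => ->; rewrite mulr0 ltxx.
set t := (c - y ^+ 2) / d.
have t_gt0 : 0 < t.
  have -> : t = - ((y ^+ 2 - c) * d) / d ^+ 2 by rewrite /t; field.
  by rewrite divr_gt0 ?oppr_gt0 // exprn_even_gt0.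
have td : t * d = c - y ^+ 2 by rewrite /t; field.
(* [(y + i v)^2 = z(2 y v)] exactly when [v^2 (4 a y^2 - 1) = c - y^2]. *)
set v := Num.sqrt t; have v_sqr : v ^+ 2 = t by rewrite sqr_sqrtr // ltW.
exists (2 * y * v) => //; rewrite /reSqrtZ.
suff -> : zfun a c (2 * y * v) = ((y +i* v)%C) ^+ 2 by rewrite sqrtc_sqr.
rewrite zfunE expr2; simpc; congr (_ +i* _)%C; last by ring.
have -> : c - a * (2 * y * v) ^+ 2 = y * y - v * v + (c - y ^+ 2 - v ^+ 2 * d).
  by rewrite /d; ring.
by rewrite v_sqr td subrr addr0.
Qed.

Lemma four_ac_sub1 : 4 * a * c - 1 = 4 * a * (r + m) * (r - m).
Proof. by rewrite -four_a_sqr_sub1 sqr_sqrtr // ltW. Qed.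

Lemma four_a_r_m_gt0 : 0 < 4 * a * (r + m).
Proof. by rewrite !mulr_gt0 // ltr_wpDl ?sqrtr_ge0 ?m_gt0. Qed.

Lemma sqrt_c_le_m : (r <= m) = (4 * a * c <= 1).
Proof. by rewrite -subr_le0 -[in RHS]subr_le0 four_ac_sub1 pmulr_rle0 ?four_a_r_m_gt0. Qed.

Lemma sqrt_c_lt_m : (r < m) = (4 * a * c < 1).
Proof. by rewrite -subr_lt0 -[in RHS]subr_lt0 four_ac_sub1 pmulr_rlt0 ?four_a_r_m_gt0. Qed.

End ReSqrtZ.

Theorem mainTheorem2 (R : realType) (a c : R) (ha : 0 < a) (hc : 0 < c) :
  inf (range (reSqrtZ a c)) =
    (if 4 * a * c <= 1 then Num.sqrt c else 1 / (2 * Num.sqrt a))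
  /\
  sup (range (reSqrtZ a c)) =
    (if 4 * a * c < 1 then 1 / (2 * Num.sqrt a) else Num.sqrt c).
Proof.
rewrite -sqrt_c_le_m // -sqrt_c_lt_m // -minEle -maxElt.
apply: inf_sup_squeeze.
- by exists (Num.sqrt c), 0; rewrite ?reSqrtZ0.
- by move=> _ [k _ <-]; apply: reSqrtZ_bounds.
- exact: reSqrtZ_onto.
Qed.
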